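(* For every closed loop $c(\widehat{\mathbf{v}})$ moving with the velocity $\widehat{\mathbf{v}}$ of the WCIFS system below, the Kelvin circulation relation holds: $$\frac{d}{dt}\oint_{c(\widehat{\mathbf{v}})}\Big(\widehat{\mathbf{v}}\cdot d\mathbf{x}+\frac{\widetilde{\mu}}{D\rho}\,d\zeta\Big)=\oint_{c(\widehat{\mathbf{v}})}d\varpi-\frac1\rho\,dp.$$
   Context: On a free surface $z=\zeta(\mathbf{x},t)$ over horizontal coordinates $\mathbf{x}=(x,y)$, the wave-current interaction on a free surface (WCIFS) equations, derived from Hamilton's principle, govern the horizontal velocity $\widehat{\mathbf{v}}$, areal density $D$ (constrained to $D=1$ by the non-hydrostatic pressure $p$, so $\mathrm{div}\,\widehat{\mathbf{v}}=0$), buoyancy $\rho$, elevation $\zeta$ and vertical velocity $\widehat{w}$, with gravity $g$ and constant $\epsilon$: $(\partial_t+\mathcal{L}_{\widehat{\mathbf{v}}})(\widehat{\mathbf{v}}\cdot d\mathbf{x}+\widetilde{w}\,d\zeta)=d\varpi-\frac1\rho dp$; $\partial_tD+\mathrm{div}(D\widehat{\mathbf{v}})=0$; $\partial_t\rho+\widehat{\mathbf{v}}\cdot\nabla\rho=0$; $\partial_t\zeta+\widehat{\mathbf{v}}\cdot\nabla\zeta=\widehat{w}(1+\epsilon|\nabla\zeta|^2)$; $\partial_t\widetilde{w}+\widehat{\mathbf{v}}\cdot\nabla\widetilde{w}=-g+\frac{2\epsilon}{D\rho}\mathrm{div}(\widehat{w}\,\widetilde{\mu}\,\nabla\zeta)$,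 where $\varpi=\tfrac12(|\widehat{\mathbf{v}}|^2+\widehat{w}^2)-g\zeta$ and $\widetilde{\mu}=D\rho\widehat{w}/(1+\epsilon|\nabla\zeta|^2)=D\rho\widetilde{w}$. $\mathcal{L}_{\widehat{\mathbf{v}}}$ is the Lie derivative along $\widehat{\mathbf{v}}$. *)

From Stdlib Require Import Reals.
From Coquelicot Require Import Coquelicot.
Open Scope R_scope.

(* A scalar field on the free surface, as a function of time t and horizontal
   position (x, y). *)
Definition Fld := R -> R -> R -> R.

Definition pt (f : Fld) : Fld := fun t x y => Derive (fun t' => f t' x y) t.
Definition px (f : Fld) : Fld := fun t x y => Derive (fun x' => f t x' y) x.
Definition py (f : Fld) : Fld := fun t x y => Derive (fun y' => f t x y') y.

Definition cont3 (f : Fld) : Prop :=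
  forall q : R * R * R,
    continuous (fun q : R * R * R => f (fst (fst q)) (snd (fst q)) (snd q)) q.

Fixpoint Ck3 (k : nat) (f : Fld) : Prop :=
  match k with
  | O => cont3 f
  | S k' => cont3 f /\
      (forall t x y, ex_derive (fun t' => f t' x y) t /\
                     ex_derive (fun x' => f t x' y) x /\
                     ex_derive (fun y' => f t x y') y) /\
      Ck3 k' (pt f) /\ Ck3 k' (px f) /\ Ck3 k' (py f)
  end.

Definition cont2 (f : R -> R -> R) : Prop :=
  forall q : R * R, continuous (fun q : R * R => f (fst q) (snd q)) q.

Fixpoint Ck2 (k : nat) (f : R -> R -> R) : Prop :=
  match k with
  | O => cont2 f
  | S k' => cont2 f /\
      (forall t s, ex_derive (fun t' => f t' s) t /\ ex_derive (fun s' => f t s') s) /\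
      Ck2 k' (fun t s => Derive (fun t' => f t' s) t) /\
      Ck2 k' (fun t s => Derive (fun s' => f t s') s)
  end.

Definition matder (v1 v2 f : Fld) : Fld :=
  fun t x y => pt f t x y + v1 t x y * px f t x y + v2 t x y * py f t x y.

Definition gradsq (zeta : Fld) : Fld :=
  fun t x y => px zeta t x y ^ 2 + py zeta t x y ^ 2.

Definition varpi (g : R) (v1 v2 what zeta : Fld) : Fld :=
  fun t x y => / 2 * (v1 t x y ^ 2 + v2 t x y ^ 2 + what t x y ^ 2) - g * zeta t x y.

Definition mutil (eps : R) (D rho what zeta : Fld) : Fld :=
  fun t x y => D t x y * rho t x y * what t x y / (1 + eps * gradsq zeta t x y).

(* Components of the one-form  α = v̂·dx + w̃ dζ = α1 dx + α2 dy. *)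
Definition alpha1 (v1 wtil zeta : Fld) : Fld := fun t x y => v1 t x y + wtil t x y * px zeta t x y.
Definition alpha2 (v2 wtil zeta : Fld) : Fld := fun t x y => v2 t x y + wtil t x y * py zeta t x y.

(* Components of  (∂_t + L_v̂) α  for the 1-form α = a1 dx + a2 dy and the
   vector field v̂ = (v1, v2), in Cartesian coordinates:
   (L_v α)_i = v_j ∂_j α_i + α_j ∂_i v_j   (= (i_v dα + d(i_v α))_i). *)
Definition lieT1 (v1 v2 a1 a2 : Fld) : Fld :=
  fun t x y => pt a1 t x y + v1 t x y * px a1 t x y + v2 t x y * py a1 t x y
             + a1 t x y * px v1 t x y + a2 t x y * px v2 t x y.
Definition lieT2 (v1 v2 a1 a2 : Fld) : Fld :=
  fun t x y => pt a2 t x y + v1 t x y * px a2 t x y + v2 t x y * py a2 t x y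
             + a1 t x y * py v1 t x y + a2 t x y * py v2 t x y.

Definition loop_int (b1 b2 : Fld) (c1 c2 : R -> R -> R) (t : R) : R :=
  RInt (fun s => b1 t (c1 t s) (c2 t s) * Derive (fun s' => c1 t s') s
               + b2 t (c1 t s) (c2 t s) * Derive (fun s' => c2 t s') s) 0 1.

From Stdlib Require Import Reals.
From Coquelicot Require Import Coquelicot.
Open Scope R_scope.

(* Since D = 1 and ρ > 0, μ̃/(Dρ) = w̃, so the circulation is that of the one-form
   α = v̂·dx + w̃ dζ.  Differentiating under the integral sign along a loop c carried
   by v̂, and using ∂_t ∂_s c = ∂_s (v̂ ∘ c) = (∇v̂)·∂_s c (Schwarz), gives the transport
   formula d/dt ∫_c α = ∫_c (∂_t + L_v̂) α, and the momentum equation rewrites the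
   right-hand side as ∫_c dϖ - ρ⁻¹ dp.  The transport formula already holds for the
   integrands, since L_v̂ α contains the exact term d(i_v̂ α). *)

Lemma continuous_pair {U V W : UniformSpace} (A : U -> V) (B : U -> W) z :
  continuous A z -> continuous B z -> continuous (fun z => (A z, B z)) z.
Proof.
  intros HA HB.
  apply (continuous_comp_2 A B (fun a b => (a, b))); auto.
  apply (continuous_ext (fun x => x)); [intros [a b]; reflexivity | apply continuous_id].
Qed.

Lemma cont3_comp {U : UniformSpace} (f : Fld) (A B C : U -> R) z :
  cont3 f -> continuous A z -> continuous B z -> continuous C z ->
  continuous (fun z => f (A z) (B z) (C z)) z.
Proof.
  intros Hf HA HB HC.
  apply (continuous_comp (fun z => ((A z, B z), C z))
           (fun q : R * R * R => f (fst (fst q)) (snd (fst q)) (snd q))).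
  - apply continuous_pair; [apply continuous_pair|]; assumption.
  - apply Hf.
Qed.

Lemma cont2_comp {U : UniformSpace} (f : R -> R -> R) (A B : U -> R) z :
  cont2 f -> continuous A z -> continuous B z -> continuous (fun z => f (A z) (B z)) z.
Proof.
  intros Hf HA HB.
  apply (continuous_comp (fun z => (A z, B z)) (fun q : R * R => f (fst q) (snd q))).
  - apply continuous_pair; assumption.
  - apply Hf.
Qed.

Lemma cont2_continuity_2d_pt (f : R -> R -> R) x y : cont2 f -> continuity_2d_pt f x y.
Proof. intros Hf. apply continuity_2d_pt_filterlim, (Hf (x, y)). Qed.

Lemma cont3_ext (f g : Fld) : (forall t x y, f t x y = g t x y) -> cont3 f -> cont3 g.
Proof.
  intros E Hf q.
  apply (continuous_ext (fun q : R * R * R => f (fst (fst q)) (snd (fst q)) (snd q)));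
    [intros; apply E | apply Hf].
Qed.

Lemma cont3_plus (f g : Fld) : cont3 f -> cont3 g -> cont3 (fun t x y => f t x y + g t x y).
Proof.
  intros Hf Hg q.
  exact (continuous_plus (fun q : R * R * R => f (fst (fst q)) (snd (fst q)) (snd q))
           (fun q : R * R * R => g (fst (fst q)) (snd (fst q)) (snd q)) q (Hf q) (Hg q)).
Qed.

Lemma cont3_mult (f g : Fld) : cont3 f -> cont3 g -> cont3 (fun t x y => f t x y * g t x y).
Proof.
  intros Hf Hg q.
  exact (continuous_mult (fun q : R * R * R => f (fst (fst q)) (snd (fst q)) (snd q))
           (fun q : R * R * R => g (fst (fst q)) (snd (fst q)) (snd q)) q (Hf q) (Hg q)).
Qed.

Lemma cont2_plus (f g : R -> R -> R) : cont2 f -> cont2 g -> cont2 (fun t s => f t s + g t s).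
Proof.
  intros Hf Hg q.
  exact (continuous_plus (fun q : R * R => f (fst q) (snd q))
           (fun q : R * R => g (fst q) (snd q)) q (Hf q) (Hg q)).
Qed.

Lemma cont2_mult (f g : R -> R -> R) : cont2 f -> cont2 g -> cont2 (fun t s => f t s * g t s).
Proof.
  intros Hf Hg q.
  exact (continuous_mult (fun q : R * R => f (fst q) (snd q))
           (fun q : R * R => g (fst q) (snd q)) q (Hf q) (Hg q)).
Qed.

Lemma cont3_comp_loop (f : Fld) (c1 c2 : R -> R -> R) :
  cont3 f -> cont2 c1 -> cont2 c2 -> cont2 (fun t s => f t (c1 t s) (c2 t s)).
Proof.
  intros Hf H1 H2 [t s].
  apply (cont3_comp f fst (fun z => c1 (fst z) (snd z)) (fun z => c2 (fst z) (snd z))).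
  - exact Hf.
  - apply continuous_fst.
  - apply (cont2_comp c1 fst snd); [exact H1 | apply continuous_fst | apply continuous_snd].
  - apply (cont2_comp c2 fst snd); [exact H2 | apply continuous_fst | apply continuous_snd].
Qed.

Record C1field (f : Fld) : Prop := {
  C1field_cont : cont3 f;
  C1field_ex_derive : forall t x y,
    ex_derive (fun t' => f t' x y) t /\ ex_derive (fun x' => f t x' y) x /\
    ex_derive (fun y' => f t x y') y;
  C1field_cont_pt : cont3 (pt f);
  C1field_cont_px : cont3 (px f);
  C1field_cont_py : cont3 (py f)
}.

Lemma Ck3_cont k f : Ck3 k f -> cont3 f.
Proof. destruct k; [trivial | intros [H _]; exact H]. Qed.

Lemma Ck3_S_C1field k f : Ck3 (S k) f -> C1field f.
Proof.
  intros (Hc & Hd & Ht & Hx & Hy).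
  split; [exact Hc | exact Hd | exact (Ck3_cont _ _ Ht)
         | exact (Ck3_cont _ _ Hx) | exact (Ck3_cont _ _ Hy)].
Qed.

Lemma Ck3_S_px k f : Ck3 (S k) f -> Ck3 k (px f).
Proof. intros (_ & _ & _ & Hx & _). exact Hx. Qed.

Lemma Ck3_S_py k f : Ck3 (S k) f -> Ck3 k (py f).
Proof. intros (_ & _ & _ & _ & Hy). exact Hy. Qed.

Lemma C1field_plus f g : C1field f -> C1field g -> C1field (fun t x y => f t x y + g t x y).
Proof.
  intros [Fc Fd Ft Fx Fy] [Gc Gd Gt Gx Gy].
  split; [apply cont3_plus; assumption | | | |].
  - intros t x y; destruct (Fd t x y) as (Ft' & Fx' & Fy'), (Gd t x y) as (Gt' & Gx' & Gy').
    exact (conj (ex_derive_plus _ _ _ Ft' Gt')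
             (conj (ex_derive_plus _ _ _ Fx' Gx') (ex_derive_plus _ _ _ Fy' Gy'))).
  - apply (cont3_ext (fun t x y => pt f t x y + pt g t x y)); [|apply cont3_plus; assumption].
    intros t x y; destruct (Fd t x y) as (? & _ & _), (Gd t x y) as (? & _ & _).
    symmetry; apply Derive_plus; assumption.
  - apply (cont3_ext (fun t x y => px f t x y + px g t x y)); [|apply cont3_plus; assumption].
    intros t x y; destruct (Fd t x y) as (_ & ? & _), (Gd t x y) as (_ & ? & _).
    symmetry; apply Derive_plus; assumption.
  - apply (cont3_ext (fun t x y => py f t x y + py g t x y)); [|apply cont3_plus; assumption].
    intros t x y; destruct (Fd t x y) as (_ & _ & ?), (Gd t x y) as (_ & _ & ?).
    symmetry; apply Derive_plus; assumption.
Qed.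

Lemma C1field_mult f g : C1field f -> C1field g -> C1field (fun t x y => f t x y * g t x y).
Proof.
  intros [Fc Fd Ft Fx Fy] [Gc Gd Gt Gx Gy].
  split; [apply cont3_mult; assumption | | | |].
  - intros t x y; destruct (Fd t x y) as (Ft' & Fx' & Fy'), (Gd t x y) as (Gt' & Gx' & Gy').
    exact (conj (ex_derive_mult _ _ _ Ft' Gt')
             (conj (ex_derive_mult _ _ _ Fx' Gx') (ex_derive_mult _ _ _ Fy' Gy'))).
  - apply (cont3_ext (fun t x y => pt f t x y * g t x y + f t x y * pt g t x y));
      [|apply cont3_plus; apply cont3_mult; assumption].
    intros t x y; destruct (Fd t x y) as (? & _ & _), (Gd t x y) as (? & _ & _).
    symmetry; apply Derive_mult; assumption.
  - apply (cont3_ext (fun t x y => px f t x y * g t x y + f t x y * px g t x y));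
      [|apply cont3_plus; apply cont3_mult; assumption].
    intros t x y; destruct (Fd t x y) as (_ & ? & _), (Gd t x y) as (_ & ? & _).
    symmetry; apply Derive_mult; assumption.
  - apply (cont3_ext (fun t x y => py f t x y * g t x y + f t x y * py g t x y));
      [|apply cont3_plus; apply cont3_mult; assumption].
    intros t x y; destruct (Fd t x y) as (_ & _ & ?), (Gd t x y) as (_ & _ & ?).
    symmetry; apply Derive_mult; assumption.
Qed.

Lemma cont3_lieT1 v1 v2 a1 a2 :
  C1field v1 -> C1field v2 -> C1field a1 -> C1field a2 -> cont3 (lieT1 v1 v2 a1 a2).
Proof.
  intros [] [] [] []. unfold lieT1.
  repeat apply cont3_plus; try apply cont3_mult; assumption.
Qed.

Lemma cont3_lieT2 v1 v2 a1 a2 :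
  C1field v1 -> C1field v2 -> C1field a1 -> C1field a2 -> cont3 (lieT2 v1 v2 a1 a2).
Proof.
  intros [] [] [] []. unfold lieT2.
  repeat apply cont3_plus; try apply cont3_mult; assumption.
Qed.

Lemma is_derive_field_comp_xy (a : Fld) t (X Y : R -> R) z dX dY :
  C1field a -> is_derive X z dX -> is_derive Y z dY ->
  is_derive (fun w => a t (X w) (Y w)) z
    (px a t (X z) (Y z) * dX + py a t (X z) (Y z) * dY).
Proof.
  intros [_ Hd _ Hx _] HX HY.
  apply is_derive_Reals, derivable_pt_lim_comp_2d;
    [| apply is_derive_Reals; exact HX | apply is_derive_Reals; exact HY].
  apply filterdiff_differentiable_pt_lim.
  eapply filterdiff_ext_lin.
  - apply (is_derive_filterdiff (a t) (X z) (Y z) (px a t)).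
    + apply filter_forall; intros [x y]; apply Derive_correct, (Hd t x y).
    + apply Derive_correct, (Hd t (X z) (Y z)).
    + apply (cont3_comp (px a) (fun _ => t) fst snd);
        [exact Hx | apply continuous_const | apply continuous_fst | apply continuous_snd].
  - intros [u v]; reflexivity.
Qed.

Lemma is_derive_field_comp (a : Fld) (X Y : R -> R) t dX dY :
  C1field a -> is_derive X t dX -> is_derive Y t dY ->
  is_derive (fun w => a w (X w) (Y w)) t
    (pt a t (X t) (Y t) + px a t (X t) (Y t) * dX + py a t (X t) (Y t) * dY).
Proof.
  intros Ha HX HY. pose proof Ha as [_ Hd Ht _ _].
  (* The map is the diagonal w ↦ G w w; differentiate G jointly at (t, t). *)
  set (G := fun u w => a u (X w) (Y w)).
  set (dGt := fun u w => pt a u (X w) (Y w)).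
  set (dGw := px a t (X t) (Y t) * dX + py a t (X t) (Y t) * dY).
  assert (HG : differentiable_pt_lim G t t (dGt t t) dGw).
  { apply filterdiff_differentiable_pt_lim.
    eapply filterdiff_ext_lin; [apply (is_derive_filterdiff G t t dGt dGw) |].
    - apply filter_forall; intros [u w]; apply Derive_correct, (Hd u (X w) (Y w)).
    - apply is_derive_field_comp_xy; assumption.
    - apply (cont3_comp (pt a) fst (fun z => X (snd z)) (fun z => Y (snd z)));
        [exact Ht | apply continuous_fst | |];
        apply (continuous_comp snd); try apply continuous_snd; simpl;
        apply (ex_derive_continuous (K := R_AbsRing) (V := R_NormedModule));
        eexists; eassumption.
    - intros [u v]; reflexivity. }
  apply is_derive_Reals.
  replace (pt a t (X t) (Y t) + px a t (X t) (Y t) * dX + py a t (X t) (Y t) * dY)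
    with (dGt t t * 1 + dGw * 1) by (unfold dGt, dGw; ring).
  exact (derivable_pt_lim_comp_2d G id id t _ _ 1 1 HG
           (derivable_pt_lim_id t) (derivable_pt_lim_id t)).
Qed.

Definition loop_integrand (b1 b2 : Fld) (c1 c2 : R -> R -> R) (t s : R) : R :=
  b1 t (c1 t s) (c2 t s) * Derive (fun s' => c1 t s') s
  + b2 t (c1 t s) (c2 t s) * Derive (fun s' => c2 t s') s.

Lemma loop_int_ext (b1 b2 b1' b2' : Fld) c1 c2 t :
  (forall t x y, b1 t x y = b1' t x y) -> (forall t x y, b2 t x y = b2' t x y) ->
  loop_int b1 b2 c1 c2 t = loop_int b1' b2' c1 c2 t.
Proof. intros E1 E2. apply RInt_ext; intros s _. rewrite E1, E2. reflexivity. Qed.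

Section Transport.

Variables (c1 c2 : R -> R -> R) (v1 v2 : Fld).
Hypotheses (Hc1 : Ck2 2 c1) (Hc2 : Ck2 2 c2) (Hv1 : C1field v1) (Hv2 : C1field v2).
Hypothesis Hflow1 : forall t s, is_derive (fun t' => c1 t' s) t (v1 t (c1 t s) (c2 t s)).
Hypothesis Hflow2 : forall t s, is_derive (fun t' => c2 t' s) t (v2 t (c1 t s) (c2 t s)).

Lemma is_derive_loop_tangent (c : R -> R -> R) (w : Fld) :
  Ck2 2 c -> C1field w ->
  (forall t s, is_derive (fun t' => c t' s) t (w t (c1 t s) (c2 t s))) ->
  forall t s, is_derive (fun u => Derive (fun s' => c u s') s) t
    (px w t (c1 t s) (c2 t s) * Derive (fun s' => c1 t s') s
     + py w t (c1 t s) (c2 t s) * Derive (fun s' => c2 t s') s).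
Proof.
  intros (_ & Hd & (_ & HdT & _ & HcST) & (_ & HdS & HcTS & _)) Hw Hflow t s.
  assert (Hswap : Derive (fun u => Derive (fun s' => c u s') s) t
                  = Derive (fun s' => Derive (fun u => c u s') t) s).
  { apply Schwarz; [| apply cont2_continuity_2d_pt; assumption ..].
    apply locally_2d_forall; intros u v.
    exact (conj (proj1 (Hd u v)) (conj (proj2 (Hd u v))
             (conj (proj1 (HdS u v)) (proj2 (HdT u v))))). }
  assert (Hvel : is_derive (fun s' => Derive (fun u => c u s') t) s
                   (px w t (c1 t s) (c2 t s) * Derive (fun s' => c1 t s') s
                    + py w t (c1 t s) (c2 t s) * Derive (fun s' => c2 t s') s)).
  { apply (is_derive_ext (fun s' => w t (c1 t s') (c2 t s'))).
    - intros s'; symmetry; apply is_derive_unique, Hflow.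
    - destruct Hc1 as (_ & Hd1 & _), Hc2 as (_ & Hd2 & _).
      apply is_derive_field_comp_xy;
        [exact Hw | apply Derive_correct, (Hd1 t s) | apply Derive_correct, (Hd2 t s)]. }
  rewrite <- (eq_trans Hswap (is_derive_unique _ _ _ Hvel)).
  apply Derive_correct, (HdS t s).
Qed.

Lemma is_derive_loop_integrand (a1 a2 : Fld) :
  C1field a1 -> C1field a2 ->
  forall u s, is_derive (fun u' => loop_integrand a1 a2 c1 c2 u' s) u
    (loop_integrand (lieT1 v1 v2 a1 a2) (lieT2 v1 v2 a1 a2) c1 c2 u s).
Proof.
  intros Ha1 Ha2 u s.
  pose proof (is_derive_field_comp a1 _ _ u _ _ Ha1 (Hflow1 u s) (Hflow2 u s)) as Hda1.
  pose proof (is_derive_field_comp a2 _ _ u _ _ Ha2 (Hflow1 u s) (Hflow2 u s)) as Hda2.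
  pose proof (is_derive_loop_tangent c1 v1 Hc1 Hv1 Hflow1 u s) as Htan1.
  pose proof (is_derive_loop_tangent c2 v2 Hc2 Hv2 Hflow2 u s) as Htan2.
  pose proof (is_derive_plus _ _ _ _ _ (is_derive_mult _ _ _ _ _ Hda1 Htan1 Rmult_comm)
                (is_derive_mult _ _ _ _ _ Hda2 Htan2 Rmult_comm)) as Hd.
  refine (eq_ind _ (is_derive _ u) Hd _ _).
  unfold loop_integrand, lieT1, lieT2, plus, mult; simpl. ring.
Qed.

Lemma cont2_loop_integrand (b1 b2 : Fld) :
  cont3 b1 -> cont3 b2 -> cont2 (loop_integrand b1 b2 c1 c2).
Proof.
  intros Hb1 Hb2.
  destruct Hc1 as (Hcc1 & _ & _ & (Hcs1 & _)), Hc2 as (Hcc2 & _ & _ & (Hcs2 & _)).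
  unfold loop_integrand.
  apply cont2_plus; apply cont2_mult; try apply cont3_comp_loop; assumption.
Qed.

Lemma is_derive_loop_int_lie (a1 a2 : Fld) :
  C1field a1 -> C1field a2 ->
  forall t, is_derive (loop_int a1 a2 c1 c2) t
    (loop_int (lieT1 v1 v2 a1 a2) (lieT2 v1 v2 a1 a2) c1 c2 t).
Proof.
  intros Ha1 Ha2 t.
  pose proof (is_derive_loop_integrand a1 a2 Ha1 Ha2) as Hd.
  assert (Hcont_lie : cont2 (loop_integrand (lieT1 v1 v2 a1 a2) (lieT2 v1 v2 a1 a2) c1 c2)).
  { apply cont2_loop_integrand; [apply cont3_lieT1 | apply cont3_lieT2]; assumption. }
  assert (Hcont : cont2 (loop_integrand a1 a2 c1 c2)).
  { apply cont2_loop_integrand; [apply Ha1 | apply Ha2]. }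
  unfold loop_int.
  refine (eq_ind _ (is_derive _ t) (is_derive_RInt_param _ 0 1 t _ _ _) _ _).
  - apply filter_forall; intros u s _. eexists. apply Hd.
  - intros s _.
    apply (continuity_2d_pt_ext
             (loop_integrand (lieT1 v1 v2 a1 a2) (lieT2 v1 v2 a1 a2) c1 c2)).
    + intros u s'. symmetry. apply is_derive_unique, Hd.
    + apply cont2_continuity_2d_pt, Hcont_lie.
  - apply filter_forall; intros u. apply (ex_RInt_continuous (V := R_CompleteNormedModule)).
    intros s _.
    apply (cont2_comp (loop_integrand a1 a2 c1 c2) (fun _ => u) (fun s => s));
      [exact Hcont | apply continuous_const | apply continuous_id].
  - apply RInt_ext; intros s _. apply is_derive_unique, Hd.
Qed.

End Transport.

Lemma mutil_div_density eps (D rho what zeta : Fld) t x y :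
  D t x y <> 0 -> rho t x y <> 0 ->
  mutil eps D rho what zeta t x y / (D t x y * rho t x y)
  = what t x y / (1 + eps * gradsq zeta t x y).
Proof.
  intros HD Hrho. unfold mutil, Rdiv.
  generalize (/ (1 + eps * gradsq zeta t x y)); intros r.
  field; split; assumption.
Qed.

Theorem mainTheorem5
  (g eps : R) (v1 v2 D rho zeta what wtil p : Fld) (c1 c2 : R -> R -> R)
  (* regularity of the fields and of the moving loop *)
  (Hv1 : Ck3 2 v1) (Hv2 : Ck3 2 v2) (HD : Ck3 2 D) (Hrho : Ck3 2 rho)
  (Hzeta : Ck3 2 zeta) (Hwhat : Ck3 2 what) (Hwtil : Ck3 2 wtil) (Hp : Ck3 2 p)
  (Hc1 : Ck2 2 c1) (Hc2 : Ck2 2 c2)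
  (Hrho_pos : forall t x y, 0 < rho t x y)
  (* w̃ := ŵ / (1 + ε |∇ζ|^2), so that μ̃ = D ρ w̃ *)
  (Hwtil_def : forall t x y, wtil t x y = what t x y / (1 + eps * gradsq zeta t x y))
  (* WCIFS equations *)
  (Hmom1 : forall t x y, lieT1 v1 v2 (alpha1 v1 wtil zeta) (alpha2 v2 wtil zeta) t x y
             = px (varpi g v1 v2 what zeta) t x y - / rho t x y * px p t x y)
  (Hmom2 : forall t x y, lieT2 v1 v2 (alpha1 v1 wtil zeta) (alpha2 v2 wtil zeta) t x y
             = py (varpi g v1 v2 what zeta) t x y - / rho t x y * py p t x y)
  (Hmass : forall t x y, pt D t x y
             + px (fun t x y => D t x y * v1 t x y) t x y
             + py (fun t x y => D t x y * v2 t x y) t x y = 0)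
  (HD1 : forall t x y, D t x y = 1)
  (Hbuoy : forall t x y, matder v1 v2 rho t x y = 0)
  (Helev : forall t x y, matder v1 v2 zeta t x y
             = what t x y * (1 + eps * gradsq zeta t x y))
  (Hvert : forall t x y, matder v1 v2 wtil t x y
             = - g + 2 * eps / (D t x y * rho t x y) *
               (px (fun t x y => what t x y * mutil eps D rho what zeta t x y * px zeta t x y) t x y
              + py (fun t x y => what t x y * mutil eps D rho what zeta t x y * py zeta t x y) t x y))
  (* the loop s ∈ [0,1] ↦ c(t,s) is closed and moves with velocity v̂ *)
  (Hclosed : forall t, c1 t 0 = c1 t 1 /\ c2 t 0 = c2 t 1)
  (Hflow1 : forall t s, is_derive (fun t' => c1 t' s) t (v1 t (c1 t s) (c2 t s)))
  (Hflow2 : forall t s, is_derive (fun t' => c2 t' s) t (v2 t (c1 t s) (c2 t s))) :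
  forall t : R,
    is_derive
      (loop_int
         (fun t x y => v1 t x y + mutil eps D rho what zeta t x y / (D t x y * rho t x y) * px zeta t x y)
         (fun t x y => v2 t x y + mutil eps D rho what zeta t x y / (D t x y * rho t x y) * py zeta t x y)
         c1 c2)
      t
      (loop_int
         (fun t x y => px (varpi g v1 v2 what zeta) t x y - / rho t x y * px p t x y)
         (fun t x y => py (varpi g v1 v2 what zeta) t x y - / rho t x y * py p t x y)
         c1 c2 t).
Proof.
  pose proof (Ck3_S_C1field _ _ Hv1) as Cv1.
  pose proof (Ck3_S_C1field _ _ Hv2) as Cv2.
  pose proof (Ck3_S_C1field _ _ Hwtil) as Cwtil.
  assert (Calpha1 : C1field (alpha1 v1 wtil zeta)).
  { apply C1field_plus; [exact Cv1 | apply C1field_mult; [exact Cwtil |]].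
    exact (Ck3_S_C1field _ _ (Ck3_S_px _ _ Hzeta)). }
  assert (Calpha2 : C1field (alpha2 v2 wtil zeta)).
  { apply C1field_plus; [exact Cv2 | apply C1field_mult; [exact Cwtil |]].
    exact (Ck3_S_C1field _ _ (Ck3_S_py _ _ Hzeta)). }
  assert (Hwtil_mu : forall t x y,
            wtil t x y = mutil eps D rho what zeta t x y / (D t x y * rho t x y)).
  { intros t x y. rewrite mutil_div_density, Hwtil_def;
      [reflexivity | rewrite HD1; apply R1_neq_R0 | apply Rgt_not_eq, Hrho_pos]. }
  intros t.
  rewrite <- (loop_int_ext _ _ _ _ c1 c2 t Hmom1 Hmom2).
  apply (is_derive_ext (loop_int (alpha1 v1 wtil zeta) (alpha2 v2 wtil zeta) c1 c2)).
  - intros u. apply loop_int_ext; intros u' x y;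
      unfold alpha1, alpha2; rewrite Hwtil_mu; reflexivity.
  - apply is_derive_loop_int_lie; assumption.
Qed.
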